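(* For all integers $q>r\geq 1$, there exists $\alpha\in[0,1]$ such that $f_{q,r}(N)=N^{\alpha+o(1)}$ as $N\to\infty$, i.e. $\log f_{q,r}(N)/\log N\to\alpha$.
   Context: For a $q$-edge-colored complete graph $K$ on vertex set $[N]$ with its natural order, $f_{q,r}(K)$ is the maximum number of vertices of a monotone path (vertices strictly increasing in traversal order) in $K$ whose edges use at most $r$ colors; $f_{q,r}(N)$ is the minimum of $f_{q,r}(K)$ over all such $q$-edge-colored $K$ on $N$ vertices. *)

From mathcomp Require Import all_boot.
Set Implicit Arguments. Unset Strict Implicit. Unset Printing Implicit Defensive.

(* The colour of the edge {x,y} with x < y is
   c (x, y); values of c on pairs (x,y) with x >= y are irrelevant. *)
Definition coloring (q N : nat) := {ffun 'I_N * 'I_N -> 'I_q}.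

Definition path_colors q N (c : coloring q N) (s : seq 'I_N) : seq 'I_q :=
  undup [seq c p | p <- zip s (behead s)].

Definition good_path q N (c : coloring q N) (r : nat) (s : seq 'I_N) : bool :=
  sorted (fun x y : 'I_N => (x < y)%N) s && (size (path_colors c s) <= r).

(* f_{q,r}(K): maximum number of vertices of such a path (a path with k
   vertices has k <= N since it is strictly increasing). *)
Definition f_K q N (c : coloring q N) (r : nat) : nat :=
  \max_(k < N.+1 | [exists t : k.-tuple 'I_N, good_path c r t]) k.

Definition f_qr (q r N : nat) : nat :=
  \big[minn/N]_(c : coloring q N) f_K c r.

(* Reals comes before all_boot so that [^] in nat_scope denotes [expn]. *)
From Stdlib Require Import Reals Lra Classical.
From HB Require Import structures.
From mathcomp Require Import all_boot zify.
Set Implicit Arguments. Unset Strict Implicit. Unset Printing Implicit Defensive.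

(* Substituting an extremal colouring of K_b into every vertex of an extremal
   colouring of K_a (edges inside a block coloured by the inner colouring,
   edges between blocks by the outer one) shows f(N) <= f(a) f(b) whenever
   N <= ab: a monotone path visits the blocks monotonically, and its stretch
   inside one block is a monotone path of the inner colouring, all using only
   the colours of the path.  Hence f(n) <= f(M)^(k+1) for M^k <= n < M^(k+1),
   i.e. log f(n) / log n <= log f(M) / log M + 1/k, so the ratio converges to
   its infimum over n >= 2, as in Fekete's lemma. *)

Definition edge_colors q n (c : coloring q n) (s : seq 'I_n) : seq 'I_q :=
  [seq c e | e <- zip s (behead s)].

Definition colored_path q n (c : coloring q n) (C : seq 'I_q) (s : seq 'I_n) :=
  sorted (fun x y : 'I_n => x < y) s && all (mem C) (edge_colors c s).

Section LongestPath.

Variables (q N : nat) (c : coloring q N) (r : nat).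

Lemma size_le_f_K s : good_path c r s -> size s <= f_K c r.
Proof.
move=> s_good; have /andP[s_sorted _] := s_good.
have s_uniq : uniq s.
  by apply: sorted_uniq s_sorted => [???|?]; [apply: ltn_trans | apply: ltnn].
have s_lt : size s < N.+1.
  by rewrite ltnS -(card_uniqP s_uniq) (leq_trans (max_card _)) ?card_ord.
apply: (@leq_bigmax_cond _ _ (fun k : 'I_N.+1 => nat_of_ord k) (Ordinal s_lt)).
by apply/existsP; exists (in_tuple s).
Qed.

Lemma f_K_le m : (forall s, good_path c r s -> size s <= m) -> f_K c r <= m.
Proof. by move=> le_m; apply/bigmax_leqP => k /existsP[t /le_m]; rewrite size_tuple. Qed.

Lemma f_K_le_N : f_K c r <= N.
Proof. by apply/bigmax_leqP => k _; rewrite -ltnS. Qed.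

Lemma colored_path_size_le_f_K (C : seq 'I_q) s :
  size C <= r -> colored_path c C s -> size s <= f_K c r.
Proof.
move=> C_le /andP[s_sorted /allP s_colors]; apply: size_le_f_K.
rewrite /good_path s_sorted (leq_trans _ C_le) //.
have colors_sub : {subset path_colors c s <= C}.
  by move=> e; rewrite /path_colors mem_undup => /s_colors.
exact: uniq_leq_size (undup_uniq _) colors_sub.
Qed.

Lemma good_path_colored s : good_path c r s -> colored_path c (path_colors c s) s.
Proof.
case/andP=> s_sorted _; rewrite /colored_path s_sorted.
by apply/allP => e e_in; rewrite inE /path_colors mem_undup.
Qed.

End LongestPath.

HB.instance Definition _ := SemiGroup.isComLaw.Build nat minn minnA minnC.

Section ExtremalColoring.

Variables (q r N : nat).

Lemma f_qr_le_f_K (c : coloring q N) : f_qr q r N <= f_K c r.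
Proof. by rewrite /f_qr (bigD1 c) //= geq_minl. Qed.

Lemma f_qr_le_N : f_qr q r N <= N.
Proof.
rewrite /f_qr; elim/big_ind: _ => // [x y x_le _|c _]; first by rewrite geq_min x_le.
exact: f_K_le_N.
Qed.

Lemma f_qr_attained : 0 < q -> exists c : coloring q N, f_qr q r N = f_K c r.
Proof.
move=> q_gt0; pose c0 : coloring q N := [ffun=> Ordinal q_gt0].
case: (@arg_minnP _ c0 predT (fun c => f_K c r) isT) => c _ c_min.
exists c; apply/eqP; rewrite eqn_leq f_qr_le_f_K /= /f_qr.
elim/big_ind: _ => [|x y x_ge y_ge|c' _]; first exact: f_K_le_N.
  by rewrite leq_min x_ge.
exact: c_min.
Qed.

Lemma f_qr_gt0 : 0 < q -> 0 < N -> 0 < f_qr q r N.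
Proof.
move=> q_gt0 N_gt0; have [c ->] := f_qr_attained q_gt0.
exact: (@size_le_f_K _ _ c r [:: Ordinal N_gt0]).
Qed.

End ExtremalColoring.

Section LexicographicProduct.

Variables (q a b N : nat) (c1 : coloring q a.+1) (c2 : coloring q b.+1).

Definition block (x : 'I_N) : 'I_a.+1 := inord (x %/ b.+1).
Definition offset (x : 'I_N) : 'I_b.+1 := inord (x %% b.+1).

Definition lex_coloring : coloring q N :=
  [ffun e => if block e.1 == block e.2 then c2 (offset e.1, offset e.2)
             else c1 (block e.1, block e.2)].

Hypothesis N_le : N <= a.+1 * b.+1.

Lemma blockE (x : 'I_N) : block x = x %/ b.+1 :> nat.
Proof. by rewrite inordK // ltn_divLR // (leq_trans (ltn_ord x)). Qed.

Lemma offsetE (x : 'I_N) : offset x = x %% b.+1 :> nat.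
Proof. by rewrite inordK // ltn_mod. Qed.

Lemma block_mono (x y : 'I_N) : x < y -> block x <= block y.
Proof. by move=> /ltnW x_le_y; rewrite !blockE leq_div2r. Qed.

Lemma offset_mono (x y : 'I_N) : x < y -> block x = block y -> offset x < offset y.
Proof.
move=> x_lt_y /(congr1 (@nat_of_ord _)); rewrite !blockE !offsetE => same_block.
by move: x_lt_y; rewrite {1}(divn_eq x b.+1) {1}(divn_eq y b.+1) same_block ltn_add2l.
Qed.

Variables (C : seq 'I_q) (m1 m2 : nat).
Hypothesis blocks_bounded : forall p, colored_path c1 C p -> size p <= m1.
Hypothesis offsets_bounded : forall t, colored_path c2 C t -> size t <= m2.

Lemma colored_lex_path_split (x : 'I_N) s : colored_path lex_coloring C (x :: s) ->
  exists p t, [/\ colored_path c1 C (block x :: p), colored_path c2 C (offset x :: t)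
                & size s <= size p * m2 + size t].
Proof.
elim: s x => [|y s IH] x; first by exists [::], [::].
rewrite /colored_path /= => /andP[/andP[x_lt_y ys_sorted] /andP[xy_color ys_colors]].
have [p [t [p_col t_col s_le]]] := IH y (introT andP (conj ys_sorted ys_colors)).
have {xy_color}: lex_coloring (x, y) \in C by [].
rewrite ffunE /=; case: eqVneq => [same|diff] xy_color.
- exists p, (offset y :: t); split; first by rewrite same.
    by move: t_col; rewrite /colored_path /= offset_mono // xy_color.
  by rewrite /= addnS ltnS.
- exists (block y :: p), [::]; split=> //.
    move: p_col; rewrite /colored_path /= xy_color ltn_neqAle block_mono //.
    by rewrite val_eqE diff.
  have := offsets_bounded t_col; rewrite /= mulSn; lia.
Qed.

Lemma colored_lex_path_size s : colored_path lex_coloring C s -> size s <= m1 * m2.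
Proof.
case: s => [//|x s] /colored_lex_path_split[p [t [/blocks_bounded p_le]]].
move=> /offsets_bounded t_le s_le; apply: leq_trans (leq_mul p_le (leqnn m2)).
by move: t_le s_le; rewrite /= mulSn; lia.
Qed.

End LexicographicProduct.

Lemma f_K_lex_coloring q r a b N (c1 : coloring q a.+1) (c2 : coloring q b.+1) :
  N <= a.+1 * b.+1 -> f_K (lex_coloring N c1 c2) r <= f_K c1 r * f_K c2 r.
Proof.
move=> N_le; apply: f_K_le => s s_good.
have colors_le : size (path_colors (lex_coloring N c1 c2) s) <= r by case/andP: s_good.
apply: (colored_lex_path_size N_le _ _ (good_path_colored s_good)) => p;
  exact: colored_path_size_le_f_K colors_le.
Qed.

Lemma f_qr_submul q r N a b : 0 < q -> N <= a * b ->
  f_qr q r N <= f_qr q r a * f_qr q r b.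
Proof.
move=> q_gt0; have := f_qr_le_N q r N.
case: a b => [|a] [|b] f_le N_le; try by rewrite (leq_trans f_le) // (leq_trans N_le) ?muln0.
have [c1 ->] := f_qr_attained r a.+1 q_gt0.
have [c2 ->] := f_qr_attained r b.+1 q_gt0.
exact: leq_trans (f_qr_le_f_K r (lex_coloring N c1 c2)) (f_K_lex_coloring r c1 c2 N_le).
Qed.

Open Scope R_scope.

Lemma ln_le x y : 0 < x -> x <= y -> ln x <= ln y.
Proof.
move=> x_gt0 /Rle_lt_or_eq_dec[x_lt_y|->]; last exact: Rle_refl.
exact/Rlt_le/ln_increasing.
Qed.

Lemma INR_leq m n : (m <= n)%N -> INR m <= INR n.
Proof. by move/leP; apply: le_INR. Qed.

Lemma ln_INR_le m n : (0 < m)%N -> (m <= n)%N -> ln (INR m) <= ln (INR n).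
Proof. by move=> /ltP m_gt0 /INR_leq; apply: ln_le; apply: lt_0_INR. Qed.

Lemma ln_INR_ge0 n : (0 < n)%N -> 0 <= ln (INR n).
Proof. by move=> n_gt0; rewrite -ln_1; apply: (ln_INR_le (m := 1)). Qed.

Lemma ln_INR_gt0 n : (1 < n)%N -> 0 < ln (INR n).
Proof.
move=> /INR_leq /= n_ge2; rewrite -ln_1; apply: ln_increasing; lra.
Qed.

Lemma INR_expn m k : INR (m ^ k) = INR m ^ k.
Proof. by elim: k => [|k IH] //; rewrite expnS -multE mult_INR IH. Qed.

Lemma ln_INR_expn m k : (0 < m)%N -> ln (INR (m ^ k)) = INR k * ln (INR m).
Proof. by move=> /ltP m_gt0; rewrite INR_expn ln_pow //; apply: lt_0_INR. Qed.

Lemma div_le_add_inv A B a b k : 0 < b -> 1 <= k -> k * b <= B ->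
  0 <= A <= (k + 1) * a -> a <= b -> A / B <= a / b + / k.
Proof.
move=> b_gt0 k_ge1 B_ge [A_ge0 A_le] a_le.
have B_gt0 : 0 < B by nra.
apply: (Rle_trans _ ((k + 1) * a / (k * b))).
  apply: Rmult_le_compat => //; first exact/Rlt_le/Rinv_0_lt_compat.
  apply: Rinv_le_contravar => //; nra.
have ratio_le1 : a / b <= 1.
  by apply: (Rmult_le_reg_r b) => //; rewrite /Rdiv Rmult_assoc Rinv_l; lra.
have -> : (k + 1) * a / (k * b) = a / b + a / b * / k by field; lra.
apply: Rplus_le_compat_l; rewrite -{2}(Rmult_1_l (/ k)).
by apply: Rmult_le_compat_r => //; apply/Rlt_le/Rinv_0_lt_compat; lra.
Qed.

Lemma ex_inf (P : nat -> Prop) (u : nat -> R) (m : R) :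
  (exists n, P n) -> (forall n, P n -> m <= u n) ->
  exists a, [/\ m <= a, forall n, P n -> a <= u n
              & forall eps, 0 < eps -> exists2 n, P n & u n < a + eps].
Proof.
move=> [n0 P_n0] m_le.
pose lower x := forall n, P n -> x <= u n.
have lower_bounded : bound lower by exists (u n0) => x /(_ n0 P_n0).
have [a [a_ub a_least]] := completeness lower lower_bounded (ex_intro lower m m_le).
exists a; split=> [|n P_n|eps eps_gt0]; first exact: a_ub.
- by apply: a_least => x /(_ n P_n).
- apply: NNPP => no_n.
  have : a + eps <= a; last lra.
  apply: a_ub => n P_n; apply: Rnot_lt_le => u_lt; apply: no_n; by exists n.
Qed.

Section SubmultiplicativeGrowth.

Variable g : nat -> nat.
Hypothesis g_gt0 : forall n, (0 < n)%N -> (0 < g n)%N.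
Hypothesis g_le : forall n, (g n <= n)%N.
Hypothesis g_submul : forall n a b, (n <= a * b)%N -> (g n <= g a * g b)%N.

Definition log_ratio n := ln (INR (g n)) / ln (INR n).

Lemma submul_le_expn n M k : (n <= M ^ k)%N -> (g n <= g M ^ k)%N.
Proof.
elim: k n => [|k IH] n; first by rewrite expn0 => /(leq_trans (g_le n)).
rewrite expnS => /g_submul /leq_trans; apply.
by rewrite expnS leq_mul2l IH ?orbT.
Qed.

Lemma log_ratio_bounds n : (1 < n)%N -> 0 <= log_ratio n <= 1.
Proof.
move=> n_gt1; have ln_n_gt0 := ln_INR_gt0 n_gt1.
have g_n_gt0 : (0 < g n)%N by apply: g_gt0; apply: ltnW.
have ln_g_ge0 := ln_INR_ge0 g_n_gt0.
have ln_g_le := ln_INR_le g_n_gt0 (g_le n).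
rewrite /log_ratio; split.
  by apply: Rmult_le_pos => //; apply/Rlt_le/Rinv_0_lt_compat.
by apply: (Rmult_le_reg_r (ln (INR n))) => //; rewrite /Rdiv Rmult_assoc Rinv_l; lra.
Qed.

Lemma log_ratio_le_base M k n : (1 < M)%N -> (0 < k)%N -> (M ^ k <= n < M ^ k.+1)%N ->
  log_ratio n <= log_ratio M + / INR k.
Proof.
move=> M_gt1 k_gt0 /andP[n_ge n_lt].
have M_gt0 : (0 < M)%N by apply: ltnW.
have g_M_gt0 := g_gt0 M_gt0.
have g_n_gt0 : (0 < g n)%N by apply: g_gt0; apply: leq_trans n_ge; rewrite expn_gt0 M_gt0.
apply: div_le_add_inv.
- exact: ln_INR_gt0.
- exact: (INR_leq k_gt0).
- by rewrite -ln_INR_expn //; apply: ln_INR_le; rewrite ?expn_gt0 ?M_gt0.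
- split; first exact: ln_INR_ge0.
  rewrite -S_INR -ln_INR_expn //; apply: ln_INR_le => //.
  by apply: submul_le_expn; apply: ltnW.
- exact: ln_INR_le g_M_gt0 (g_le M).
Qed.

Theorem log_ratio_cvg : exists alpha, 0 <= alpha <= 1 /\ Un_cv log_ratio alpha.
Proof.
have [alpha [alpha_ge0 alpha_le alpha_approx]] :=
  @ex_inf (fun n => 1 < n)%N log_ratio 0 (ex_intro _ 2%N isT)
    (fun n n_gt1 => proj1 (log_ratio_bounds n_gt1)).
exists alpha; split.
  by split=> //; apply: Rle_trans (alpha_le 2%N isT) (proj2 (log_ratio_bounds _)).
move=> eps eps_gt0.
have [M M_gt1 M_close] := alpha_approx (eps / 2) ltac:(lra).
have [K [K_small /ltP K_gt0]] := archimed_cor1 (eps / 2) ltac:(lra).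
exists (M ^ K)%N => n /leP n_ge.
have M_le_n : (M <= n)%N.
  by apply: leq_trans n_ge; rewrite -{1}(expn1 M) leq_pexp2l // ltnW.
pose k := trunc_log M n.
have K_le_k : (K <= k)%N := trunc_log_max M_gt1 n_ge.
have k_bounds : (M ^ k <= n < M ^ k.+1)%N.
  by rewrite trunc_logP ?trunc_log_ltn //; apply: leq_trans M_le_n; apply: ltnW.
have n_close := log_ratio_le_base M_gt1 (leq_trans K_gt0 K_le_k) k_bounds.
have inv_k_le : / INR k <= / INR K.
  by apply: Rinv_le_contravar; [apply/lt_0_INR/ltP | exact: INR_leq].
have alpha_le_n := alpha_le n (leq_trans M_gt1 M_le_n).
rewrite /R_dist Rabs_right; lra.
Qed.

End SubmultiplicativeGrowth.

Theorem proposition3p5 (q r : nat) :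
  (1 <= r)%nat -> (r < q)%nat ->
  exists alpha : R, 0 <= alpha <= 1 /\
    Un_cv (fun N : nat => ln (INR (f_qr q r N)) / ln (INR N)) alpha.
Proof.
move=> _ r_lt_q; have q_gt0 : (0 < q)%N by apply: leq_ltn_trans r_lt_q.
apply: (@log_ratio_cvg (f_qr q r)) => [n|n|n a b].
- exact: f_qr_gt0.
- exact: f_qr_le_N.
- exact: f_qr_submul.
Qed.
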